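(* Let $X, Y$ be finite input sets and $\mathcal{A}, \mathcal{B}$ finite output sets. Let $G$ be a bipartite Bell expression $G(Q) = \sum_{a\in\mathcal{A},b\in\mathcal{B},x\in X,y\in Y} \alpha_{a,b,x,y}\, Q(a,b|x,y)$ with coefficients $\alpha_{a,b,x,y}\ge 0$, normalized so that its classical (local) value satisfies $\omega_c(G)\le 1$. Let $\omega_{ns}(G)$ denote the maximum of $G(Q)$ over all bipartite no-signaling boxes $Q$. Then there exists a tripartite relativistic causal box $\{P(a,b,c|x,y,z)\}$ with $a,c\in\mathcal{A}$, $b\in\mathcal{B}$, $x,z\in X$, $y\in Y$ such that $$\sum_{a,b,x,y}\alpha_{a,b,x,y}\,P_{AB}(a,b|x,y)=\omega_{ns}(G)\quad\text{and}\quad \sum_{c,b,z,y}\alpha_{c,b,z,y}\,P_{CB}(c,b|z,y)=\omega_{ns}(G),$$ where $P_{AB}(a,b|x,y)=\sum_c P(a,b,c|x,y,z)$ and $P_{CB}(c,b|z,y)=\sum_a P(a,b,c|x,y,z)$ (both well defined by the relativistic causal constraints). That is, both pairs Alice–Bob and Bob–Charlie (with Charlie playing Alice's role) simultaneously attain the maximal no-signaling value of $G$.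
   Context: A bipartite box $\{Q(a,b|x,y)\}$ is a family of probability distributions over $(a,b)$ indexed by $(x,y)$; it is no-signaling if $\sum_b Q(a,b|x,y)$ is independent of $y$ and $\sum_a Q(a,b|x,y)$ is independent of $x$. The classical value $\omega_c(G)$ is the maximum of $G$ over local (convex mixtures of deterministic product) boxes. A tripartite box $\{P(a,b,c|x,y,z)\}$ (nonnegative, with $\sum_{a,b,c}P(a,b,c|x,y,z)=1$ for all $x,y,z$) is called relativistic causal (for the measurement configuration in which Bob's input may influence the correlations between Alice and Charlie) if it satisfies: (i) $\sum_a P(a,b,c|x,y,z)$ is independent of $x$ for all $y,z,b,c$; (ii) $\sum_c P(a,b,c|x,y,z)$ is independent of $z$ for all $x,y,a,b$; (iii) $\sum_{b,c} P(a,b,c|x,y,z)$ is independent of $(y,z)$ for all $x,a$; (iv) $\sum_{a,b} P(a,b,c|x,y,z)$ is independent of $(x,y)$ for all $z,c$. (Unlike full no-signaling, $\sum_b P(a,b,c|x,y,z)$ is not required to be independent of $y$.) *)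

From HB Require Import structures.
From mathcomp Require Import all_boot all_order all_algebra.
From mathcomp Require Import classical_sets reals.
Set Implicit Arguments. Unset Strict Implicit. Unset Printing Implicit Defensive.
Import Order.TTheory GRing.Theory Num.Theory.
Local Open Scope ring_scope.
Local Open Scope classical_set_scope.

Definition is_box2 (R : realType) (A B X Y : finType) (Q : A -> B -> X -> Y -> R) :=
  (forall a b x y, 0 <= Q a b x y) /\
  (forall x y, \sum_(a : A) \sum_(b : B) Q a b x y = 1).

Definition no_signaling2 (R : realType) (A B X Y : finType) (Q : A -> B -> X -> Y -> R) :=
  [/\ is_box2 Q,
      (forall a x y y', \sum_(b : B) Q a b x y = \sum_(b : B) Q a b x y') &
      (forall b x x' y, \sum_(a : A) Q a b x y = \sum_(a : A) Q a b x' y)].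

Definition local2 (R : realType) (A B X Y : finType) (Q : A -> B -> X -> Y -> R) :=
  exists w : ({ffun X -> A} * {ffun Y -> B})%type -> R,
    [/\ (forall l, 0 <= w l), \sum_l w l = 1 &
        (forall a b x y, Q a b x y = \sum_l w l * ((l.1 x == a) && (l.2 y == b))%:R)].

Definition bell_value (R : realType) (A B X Y : finType)
    (alpha : A -> B -> X -> Y -> R) (Q : A -> B -> X -> Y -> R) : R :=
  \sum_(a : A) \sum_(b : B) \sum_(x : X) \sum_(y : Y) alpha a b x y * Q a b x y.

Definition classical_value_le1 (R : realType) (A B X Y : finType)
    (alpha : A -> B -> X -> Y -> R) :=
  forall Q : A -> B -> X -> Y -> R, local2 Q -> bell_value alpha Q <= 1.

Definition omega_ns (R : realType) (A B X Y : finType)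
    (alpha : A -> B -> X -> Y -> R) : R :=
  sup [set r | exists Q : A -> B -> X -> Y -> R, no_signaling2 Q /\ r = bell_value alpha Q].

Definition relativistic_causal (R : realType) (A B X Y : finType)
    (P : A -> B -> A -> X -> Y -> X -> R) :=
  [/\ ((forall a b c x y z, 0 <= P a b c x y z) /\
       (forall x y z, \sum_(a : A) \sum_(b : B) \sum_(c : A) P a b c x y z = 1)),
      (forall y z b c x x', \sum_(a : A) P a b c x y z = \sum_(a : A) P a b c x' y z),
      (forall x y a b z z', \sum_(c : A) P a b c x y z = \sum_(c : A) P a b c x y z'),
      (forall x a y z y' z', \sum_(b : B) \sum_(c : A) P a b c x y z
                           = \sum_(b : B) \sum_(c : A) P a b c x y' z') &
      (forall z c x y x' y', \sum_(a : A) \sum_(b : B) P a b c x y z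
                           = \sum_(a : A) \sum_(b : B) P a b c x' y' z)].

From HB Require Import structures.
From mathcomp Require Import all_boot all_order all_algebra.
From mathcomp Require Import classical_sets reals topology normedtype derive.
Set Implicit Arguments. Unset Strict Implicit. Unset Printing Implicit Defensive.
Import Order.TTheory GRing.Theory Num.Theory numFieldNormedType.Exports.
Local Open Scope ring_scope.
Local Open Scope classical_set_scope.

(** The no-signaling boxes form a closed subset of the unit cube in the
    finite-dimensional space of all boxes, hence a compact set, so the linear
    functional [bell_value alpha] attains its supremum at some no-signaling
    box [Q].  Gluing two copies of [Q] along Bob,
    [P(a,b,c|x,y,z) = Q(a,b|x,y) Q(c,b|z,y) / Q_B(b|y)],
    gives a tripartite box whose Alice-Bob and Charlie-Bob marginals are both
    [Q]; the relativistic causal constraints are then inherited from the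
    no-signaling constraints of [Q].  Neither the sign of the coefficients nor
    the bound on the classical value is needed. *)

Lemma closed_forall (T : topologicalType) (J : Type) (P : J -> set T) :
  (forall j, closed (P j)) -> closed [set t | forall j, P j t].
Proof.
move=> Pcl; have -> : [set t | forall j, P j t] = \bigcap_(j in setT) P j.
  by apply/seteqP; split => t /= Pt j //; apply: Pt.
exact: closed_bigI.
Qed.

Lemma closed_eq_continuous (R : realType) (T : topologicalType) (F G : T -> R) :
  continuous F -> continuous G -> closed [set t | F t = G t].
Proof.
move=> Fc Gc; have -> : [set t | F t = G t] = (fun t => F t - G t) @^-1` [set 0].
  apply/seteqP; split => t /=; first by move->; rewrite subrr.
  by move/eqP; rewrite subr_eq0 => /eqP.
apply: preimage_closed; last exact: closed_eq.
by move=> t _; apply: (continuousD (Fc t)); apply: continuousN; apply: Gc.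
Qed.

Lemma closed_le_continuous (R : realType) (T : topologicalType) (F G : T -> R) :
  continuous F -> continuous G -> closed [set t | F t <= G t].
Proof.
move=> Fc Gc.
have -> : [set t | F t <= G t] = (fun t => G t - F t) @^-1` [set r | 0 <= r].
  by apply/seteqP; split => t /=; rewrite subr_ge0.
apply: preimage_closed; last exact: closed_ge.
by move=> t _; apply: (continuousD (Gc t)); apply: continuousN; apply: Fc.
Qed.

Lemma continuous_sum (R : realType) (T : topologicalType) (J : Type) (r : seq J)
    (F : J -> T -> R) :
  (forall j, continuous (F j)) -> continuous (fun t => \sum_(j <- r) F j t).
Proof.
by move=> Fc; apply: continuous_big => [|j _]; [exact: add_continuous | exact: Fc].
Qed.

Lemma box2_le1 (R : realType) (A B X Y : finType) (Q : A -> B -> X -> Y -> R) :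
  is_box2 Q -> forall a b x y, Q a b x y <= 1.
Proof.
move=> [Q_ge0 Q_sum1] a b x y; rewrite -(Q_sum1 x y).
rewrite (bigD1 a) //= (bigD1 b) //= -addrA lerDl.
by rewrite addr_ge0 // !sumr_ge0 // => *; rewrite sumr_ge0.
Qed.

Lemma no_signaling2_uniform (R : realType) (A B X Y : finType) :
  (0 < #|A|)%N -> (0 < #|B|)%N ->
  no_signaling2 (fun (_ : A) (_ : B) (_ : X) (_ : Y) => ((#|A| * #|B|)%N%:R^-1 : R)).
Proof.
move=> A_gt0 B_gt0; split => //; split => [*|x y]; first by rewrite invr_ge0.
under eq_bigr do rewrite sumr_const.
rewrite sumr_const -mulrnA -[_ *+ (_ * _)%N]mulr_natr mulnC mulVf //.
by rewrite pnatr_eq0 -lt0n muln_gt0 A_gt0 B_gt0.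
Qed.

Section NoSignalingMaximum.
Variables (R : realType) (A B X Y : finType).
Hypotheses (A_gt0 : (0 < #|A|)%N) (B_gt0 : (0 < #|B|)%N).

Local Notation T := {ptws A * B * X * Y -> R}.
Let box_of (g : T) : A -> B -> X -> Y -> R := fun a b x y => g (a, b, x, y).
Let eval_continuous i : continuous (fun g : T => g i) := @proj_continuous _ _ i.

Lemma closed_no_signaling2 : closed [set g : T | no_signaling2 (box_of g)].
Proof.
have -> : [set g : T | no_signaling2 (box_of g)] =
    [set g | forall a b x y, 0 <= box_of g a b x y]
    `&` [set g | forall x y, \sum_a \sum_b box_of g a b x y = 1]
    `&` [set g | forall a x y y', \sum_b box_of g a b x y = \sum_b box_of g a b x y']
    `&` [set g | forall b x x' y, \sum_a box_of g a b x y = \sum_a box_of g a b x' y].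
  by apply/seteqP; split => g /= => [[[]]|[[[]]]].
repeat apply: closedI;
  do [do 4 (apply: (@closed_forall T) => ?) | do 2 (apply: (@closed_forall T) => ?)].
- by apply: closed_le_continuous; [exact: cst_continuous | exact: eval_continuous].
- apply: closed_eq_continuous; last exact: cst_continuous.
  by do 2 apply: continuous_sum => ?; exact: eval_continuous.
- by apply: closed_eq_continuous; apply: continuous_sum => ?; exact: eval_continuous.
- by apply: closed_eq_continuous; apply: continuous_sum => ?; exact: eval_continuous.
Qed.

Lemma compact_no_signaling2 : compact [set g : T | no_signaling2 (box_of g)].
Proof.
set NS := [set g : T | _].
have cube_compact : compact [set g : T | forall i, `[0, 1] (g i)].
  by apply: (@tychonoff _ (fun=> R) (fun=> `[0, 1])) => i; exact: segment_compact.
suff <- : [set g : T | forall i, `[0, 1] (g i)] `&` NS = NS.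
  exact: compact_closedI cube_compact closed_no_signaling2.
apply/setIidr => g [[g_ge0 g_sum1] _ _] [[[a b] x] y].
by rewrite /= in_itv /= g_ge0 (box2_le1 (conj g_ge0 g_sum1)).
Qed.

Lemma exists_max_no_signaling2 (alpha : A -> B -> X -> Y -> R) :
  exists2 Q, no_signaling2 Q &
    forall Q', no_signaling2 Q' -> bell_value alpha Q' <= bell_value alpha Q.
Proof.
have NS0 : [set g : T | no_signaling2 (box_of g)] !=set0.
  by exists (fun=> (#|A| * #|B|)%N%:R^-1); exact: no_signaling2_uniform.
have bell_continuous : continuous (fun g : T => bell_value alpha (box_of g)).
  do 4 (apply: continuous_sum => ?); move=> g.
  by apply: continuousM; [exact: cst_continuous | exact: eval_continuous].
have [Q NSQ Qmax] := compact_EVT_max NS0 compact_no_signaling2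
  (continuous_subspaceT bell_continuous).
exists (box_of Q) => [|Q' NSQ']; first by rewrite inE in NSQ.
exact: (Qmax (fun i => Q' i.1.1.1 i.1.1.2 i.1.2 i.2) (mem_set NSQ')).
Qed.

End NoSignalingMaximum.

Lemma sup_max (R : realType) (E : set R) (x : R) : E x -> ubound E x -> sup E = x.
Proof.
move=> Ex x_ub; apply/eqP; rewrite eq_le ge_sup //=; last by exists x.
by apply: sup_upper_bound => //; split; exists x.
Qed.

Lemma omega_ns_max (R : realType) (A B X Y : finType)
    (alpha Q : A -> B -> X -> Y -> R) :
  no_signaling2 Q ->
  (forall Q', no_signaling2 Q' -> bell_value alpha Q' <= bell_value alpha Q) ->
  omega_ns alpha = bell_value alpha Q.
Proof.
move=> NSQ Qmax; apply: sup_max; first by exists Q.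
by move=> _ [Q' [NSQ' ->]]; exact: Qmax.
Qed.

Section Gluing.
Variables (R : realType) (A B X Y : finType) (Q : A -> B -> X -> Y -> R).

Definition marginal_B b x y := \sum_a Q a b x y.

(* Alice and Charlie are conditionally independent given Bob's output.  Where
   [marginal_B b x y = 0] both factors of the numerator vanish, so the junk
   value of the division by zero is harmless. *)
Definition glue a b c x y z := Q a b x y * Q c b z y / marginal_B b x y.

Hypothesis Q_ge0 : forall a b x y, 0 <= Q a b x y.
Hypothesis marginal_B_indep : forall b x x' y, marginal_B b x y = marginal_B b x' y.

Lemma glue_ge0 a b c x y z : 0 <= glue a b c x y z.
Proof. by rewrite divr_ge0 ?mulr_ge0 ?sumr_ge0. Qed.

Lemma marginal_B_eq0 a b x y : marginal_B b x y = 0 -> Q a b x y = 0.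
Proof. by move=> /psumr_eq0P-> // a' _; exact: Q_ge0. Qed.

Lemma sum_glue_C a b x y z : \sum_c glue a b c x y z = Q a b x y.
Proof.
rewrite -big_distrl -big_distrr /= -/(marginal_B b z y) (marginal_B_indep b z x).
have [/(marginal_B_eq0 a)->|QB_neq0] := eqVneq (marginal_B b x y) 0.
  by rewrite !mul0r.
by rewrite -mulrA mulfV ?mulr1.
Qed.

Lemma sum_glue_A b c x y z : \sum_a glue a b c x y z = Q c b z y.
Proof.
rewrite -!big_distrl /= -/(marginal_B b x y).
have [QB_eq0|QB_neq0] := eqVneq (marginal_B b x y) 0.
  rewrite (marginal_B_indep b x z) in QB_eq0.
  by rewrite (marginal_B_eq0 c QB_eq0) mulr0 mul0r.
by rewrite mulrAC mulfV ?mul1r.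
Qed.

End Gluing.

Lemma relativistic_causal_glue (R : realType) (A B X Y : finType)
    (Q : A -> B -> X -> Y -> R) :
  no_signaling2 Q -> relativistic_causal (glue Q).
Proof.
move=> [[Q_ge0 Q_sum1] NS_A NS_B].
have sumC := sum_glue_C Q_ge0 NS_B; have sumA := sum_glue_A Q_ge0 NS_B.
split.
- split=> [*|x y z]; first exact: glue_ge0.
  by rewrite -(Q_sum1 x y); do 2 apply: eq_bigr => ? _; exact: sumC.
- by move=> *; rewrite !sumA.
- by move=> *; rewrite !sumC.
- move=> x a y z y' z'.
  under eq_bigr do rewrite sumC; under [RHS]eq_bigr do rewrite sumC.
  exact: NS_A.
- move=> z c x y x' y'; rewrite exchange_big [RHS]exchange_big /=.
  under eq_bigr do rewrite sumA; under [RHS]eq_bigr do rewrite sumA.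
  exact: NS_A.
Qed.

Theorem proposition1 (R : realType) (A B X Y : finType)
    (hA : (0 < #|A|)%N) (hB : (0 < #|B|)%N) (hX : (0 < #|X|)%N) (hY : (0 < #|Y|)%N)
    (alpha : A -> B -> X -> Y -> R)
    (halpha : forall a b x y, 0 <= alpha a b x y)
    (hc : classical_value_le1 alpha) :
  exists P : A -> B -> A -> X -> Y -> X -> R,
    [/\ relativistic_causal P,
        (forall z : X,
           \sum_(a : A) \sum_(b : B) \sum_(x : X) \sum_(y : Y)
              alpha a b x y * (\sum_(c : A) P a b c x y z) = omega_ns alpha) &
        (forall x : X,
           \sum_(c : A) \sum_(b : B) \sum_(z : X) \sum_(y : Y)
              alpha c b z y * (\sum_(a : A) P a b c x y z) = omega_ns alpha)].
Proof.
have [Q NSQ Qmax] := exists_max_no_signaling2 hA hB alpha.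
have [[Q_ge0 _] _ NS_B] := NSQ.
exists (glue Q); split; first exact: relativistic_causal_glue.
- move=> z; rewrite (omega_ns_max NSQ Qmax); do 4 apply: eq_bigr => ? _.
  by rewrite (sum_glue_C Q_ge0 NS_B).
- move=> x; rewrite (omega_ns_max NSQ Qmax); do 4 apply: eq_bigr => ? _.
  by rewrite (sum_glue_A Q_ge0 NS_B).
Qed.
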